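(* The generating series $f(q;x)=\sum_\gamma q^{\omega_H(\gamma)+\omega_{DU}(\gamma)}x^{n(\gamma)}$, where $\gamma$ ranges over all Schröder paths and $n(\gamma)$ is the semi-length, is $$f(q;x)=\frac{1-x-\sqrt{1-2(1+2q)x+(1-2q)^2x^2}}{2qx\,(1+(1-q)x)}.$$
   Context: Steps: $U=(1,1)$, $D=(1,-1)$, $H=(2,0)$. A Schröder path of semi-length $n$ is a lattice path from $(0,0)$ to $(2n,0)$ with steps $U,D,H$ never going below the $x$-axis. Paths are identified with words of steps; $\omega_H(\gamma)$ is the number of $H$ steps and $\omega_{DU}(\gamma)$ the number of occurrences of the factor $DU$ in $\gamma$. *)

From HB Require Import structures.
From mathcomp Require Import all_boot all_order all_algebra.
Set Implicit Arguments. Unset Strict Implicit. Unset Printing Implicit Defensive.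
Import Order.TTheory GRing.Theory Num.Theory.

(* Steps U=(1,1), D=(1,-1), H=(2,0). *)
Inductive step := U | D | H.

Fixpoint words (m : nat) : seq (seq step) :=
  if m is m'.+1 then
    flatten [seq [seq s :: w | w <- words m'] | s <- [:: U; D; H]]
  else [:: [::]].

Definition words_upto (m : nat) : seq (seq step) :=
  flatten [seq words k | k <- iota 0 m.+1].

Fixpoint schroder_from (h : nat) (w : seq step) : bool :=
  match w with
  | [::] => h == 0
  | U :: w' => schroder_from h.+1 w'
  | D :: w' => (0 < h) && schroder_from h.-1 w'
  | H :: w' => schroder_from h w'
  end.

Definition is_schroder (w : seq step) : bool := schroder_from 0 w.

(* Horizontal extent of the path (endpoint abscissa). *)
Definition xlen (w : seq step) : nat :=
  (\sum_(s <- w) (match s with H => 2 | _ => 1 end))%N.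

Definition omegaH (w : seq step) : nat :=
  count (fun s => if s is H then true else false) w.

Fixpoint omegaDU (w : seq step) : nat :=
  match w with
  | D :: ((U :: _) as w') => (omegaDU w').+1
  | _ :: w' => omegaDU w'
  | [::] => 0
  end.

Local Open Scope ring_scope.

Definition fps (R : Type) := nat -> R.

Definition fps_mul (R : nzRingType) (a b : fps R) : fps R :=
  fun n => \sum_(i < n.+1) a i * b (n - i)%N.

Definition fps_of_poly (R : nzRingType) (p : {poly R}) : fps R := fun n => p`_n.

Definition is_fsqrt (R : nzRingType) (s d : fps R) : Prop :=
  s 0%N = 1 /\ forall n, fps_mul s s n = d n.

Definition q : {poly rat} := 'X.

(* f(q;x) = sum over Schroder paths gamma of q^(omegaH + omegaDU) x^(semilength);
   coefficient of x^n: sum over Schroder paths of semi-length n (x-extent 2n,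
   hence at most 2n steps). *)
Definition schroder_gf : fps {poly rat} := fun n =>
  \sum_(w <- words_upto n.*2 | is_schroder w && (xlen w == n.*2)%N)
     q ^+ (omegaH w + omegaDU w).

(* Polynomials in x over Q[q]; x is the variable of {poly {poly rat}}. *)
Definition Qx : {poly {poly rat}} := q%:P.

Definition Delta : {poly {poly rat}} :=
  1 - 2%:R * (1 + 2%:R * Qx) * 'X + (1 - 2%:R * Qx) ^+ 2 * 'X ^+ 2.

Definition denom : {poly {poly rat}} :=
  2%:R * Qx * 'X * (1 + (1 - Qx) * 'X).

Definition numer_poly : {poly {poly rat}} := 1 - 'X.

From HB Require Import structures.
From mathcomp Require Import all_boot all_order all_algebra.
From mathcomp Require Import zify ring.
Import GRing.Theory.
Set Implicit Arguments. Unset Strict Implicit. Unset Printing Implicit Defensive.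
Local Open Scope ring_scope.

(* The generating series f(q;x) of Schroder paths weighted by
   q^(omega_H + omega_DU) is identified through the functional equation
       c(x) f^2 - (1 - x) f + 1 = 0,    c(x) = q x (1 + (1 - q) x),
   whose (principal) solution is ((1 - x) - sqrt Delta) / (2 c(x)), since
   (1 - x)^2 - 4 c(x) = Delta.  A nonempty Schroder path is either H.w or U.a.D.b with a
   and b Schroder paths (first-return decomposition); the weight of U.a.D.b is
   wt(a) wt(b), times q when b starts with U (a new factor DU).  Writing f_n
   for the coefficient of x^n, this gives the quadratic recurrence
       f_(n+1) = f_n + q (f*f)_n + q (1 - q) (f*f)_(n-1).  For any sequence a satisfying this recurrence over a commutative
   ring, the truncations P_n = a_0 + ... + a_n x^n solve the functional equation
   up to order n, and the identity
       (1 - x - 2 c P)^2 = (1 - x)^2 - 4 c + 4 c (c P^2 - (1 - x) P + 1)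
   shows that S = (1 - x) - 2 c a is a square root of (1 - x)^2 - 4 c
   ('sqrt_series_sqrt'). *)

Lemma schroder_from_cat k a h b : schroder_from k a ->
  schroder_from (h + k) (a ++ b) = schroder_from h b.
Proof.
elim: a k => [|s a IH] k /=; first by move/eqP->; rewrite addn0.
case: s => /=.
- by move=> Ha; rewrite -addnS IH.
- case/andP=> k_gt0 Ha; rewrite (_ : 0 < h + k)%N; last by lia.
  by rewrite (_ : (h + k).-1 = h + k.-1)%N ?IH //; lia.
- exact: IH.
Qed.

Lemma first_return_exists h w : schroder_from h.+1 w ->
  exists a b, [/\ w = a ++ D :: b, schroder_from 0 a & schroder_from h b].
Proof.
elim: {w}(size w) {-2}w h (leqnn (size w)) => [|n IH] [|s w] h //= Hsize.
case: s => /=.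
- move=> /(IH w h.+1 Hsize) [a1 [b1 [Ew Ha1 Hb1]]].
  have Hb1_size : (size b1 <= n)%N by move: Hsize; rewrite Ew size_cat /=; lia.
  have [a2 [b2 [Eb1 Ha2 Hb2]]] := IH b1 h Hb1_size Hb1.
  exists (U :: a1 ++ D :: a2), b2; split=> //; first by rewrite Ew Eb1 /= -catA.
  by rewrite /= -(add0n 1%N) addnC schroder_from_cat.
- by move=> Hw; exists [::], w.
- by move=> /(IH w h Hsize) [a [b [-> Ha Hb]]]; exists (H :: a), b.
Qed.

Lemma first_return_unique a b a' b' :
  schroder_from 0 a -> schroder_from 0 a' -> a ++ D :: b = a' ++ D :: b' ->
  size a = size a'.
Proof.
wlog le_aa' : a b a' b' / (size a <= size a')%N.
  move=> W Ha Ha' E; case: (leqP (size a) (size a')) => L; first exact: W E.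
  by symmetry; apply: W (esym E) => //; lia.
move=> Ha Ha' E; apply/eqP; rewrite eqn_leq le_aa' leqNgt; apply/negP => lt_aa'.
have : a' = take (size a') (a ++ D :: b) by rewrite E take_size_cat.
rewrite take_cat ltnNge (ltnW lt_aa') /=.
case: (size a' - size a)%N (subn_gt0 (size a) (size a')) => [|m]; first by rewrite lt_aa'.
by move=> _ Ea'; move: Ha'; rewrite Ea' /= -(add0n 0%N) schroder_from_cat.
Qed.

Definition is_down (s : step) : bool := if s is D then true else false.

(* Position k of w is the first return of U :: w to the axis. *)
Definition first_return_at (k : nat) (w : seq step) : bool :=
  [&& is_down (nth H w k), schroder_from 0 (take k w) & schroder_from 0 (drop k.+1 w)].

Lemma first_return_at_cat a s b :
  first_return_at (size a) (a ++ s :: b) =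
  [&& is_down s, schroder_from 0 a & schroder_from 0 b].
Proof.
by rewrite /first_return_at take_size_cat // nth_cat ltnn subnn -cat_rcons
  drop_size_cat ?size_rcons.
Qed.

Lemma first_return_atP k w : (k < size w)%N -> first_return_at k w ->
  w = take k w ++ D :: drop k.+1 w.
Proof.
move=> lt_kw /and3P[Dk _ _].
by rewrite -{1}(cat_take_drop k w) (drop_nth H lt_kw); case: (nth H w k) Dk.
Qed.

Lemma count_first_returns (R : nzRingType) w :
  \sum_(k < size w) (first_return_at k w)%:R = (schroder_from 1 w)%:R :> R.
Proof.
case S1: (schroder_from 1 w); last first.
  rewrite big1 // => k _; case Ck: (first_return_at k w) => //.
  move: S1; rewrite (first_return_atP (ltn_ord k) Ck) -(add0n 1%N) addnC.
  by case/and3P: Ck => _ Ta Db; rewrite schroder_from_cat //= Db.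
have [a [b [Ew Sa Sb]]] := first_return_exists S1.
have lt_aw : (size a < size w)%N by rewrite Ew size_cat /=; lia.
rewrite (bigD1 (Ordinal lt_aw)) //= big1 ?addr0 => [|k ne_k].
  by rewrite Ew first_return_at_cat Sa Sb.
case Ck: (first_return_at k w) => //; case/eqP: ne_k; apply/val_inj => /=.
have /and3P[_ Tk _] := Ck; have := @first_return_unique _ (drop k.+1 w) _ b Tk Sa.
by rewrite -(first_return_atP (ltn_ord k) Ck) -Ew size_take ltn_ord => /(_ erefl).
Qed.

Section WordSums.
Variable R : nzRingType.
Implicit Types (F G : seq step -> R) (N L : nat).

Lemma sum_words0 F : \sum_(w <- words 0) F w = F [::].
Proof. by rewrite big_seq1. Qed.

Lemma sum_wordsS L F : \sum_(w <- words L.+1) F w =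
  \sum_(w <- words L) F (U :: w) + \sum_(w <- words L) F (D :: w)
  + \sum_(w <- words L) F (H :: w).
Proof. by rewrite [words _]/= cats0 !big_cat !big_map -addrA. Qed.

Lemma eq_sum_words L F G : (forall w, size w = L -> F w = G w) ->
  \sum_(w <- words L) F w = \sum_(w <- words L) G w.
Proof.
elim: L F G => [|L IH] F G FG; first by rewrite !sum_words0 FG.
by rewrite !sum_wordsS; congr (_ + _ + _); apply: IH => w Hw; rewrite FG //= Hw.
Qed.

Lemma sum_words_cat k j F : \sum_(w <- words (k + j)) F w =
  \sum_(a <- words k) \sum_(b <- words j) F (a ++ b).
Proof.
by elim: k F => [|k IH] F; rewrite ?sum_words0 // addSn !sum_wordsS !IH.
Qed.

Lemma sum_words_split L k F : (k < L)%N ->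
  \sum_(w <- words L) F w = \sum_(a <- words k) \sum_(b <- words (L - k.+1))
     (F (a ++ U :: b) + F (a ++ D :: b) + F (a ++ H :: b)).
Proof.
move=> lt_kL; rewrite -{1}(subnKC lt_kL) addSnnS sum_words_cat.
by apply: eq_bigr => a _; rewrite sum_wordsS -!big_split.
Qed.

Definition wsum N F : R := \sum_(L < N) \sum_(w <- words L) F w.

Lemma eq_wsum N F G : F =1 G -> wsum N F = wsum N G.
Proof. by move=> FG; apply: eq_bigr => L _; apply: eq_bigr. Qed.

Lemma wsum0 N F : F =1 (fun=> 0) -> wsum N F = 0.
Proof. by move=> F0; rewrite /wsum big1 // => L _; rewrite big1. Qed.

Lemma wsumD N F G : wsum N (fun w => F w + G w) = wsum N F + wsum N G.
Proof. by rewrite /wsum -big_split; apply: eq_bigr => L _; rewrite -big_split. Qed.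

Lemma wsumZ N F c : wsum N (fun w => c * F w) = c * wsum N F.
Proof. by rewrite /wsum mulr_sumr; apply: eq_bigr => L _; rewrite mulr_sumr. Qed.

Lemma wsum_ext N M F : (N <= M)%N -> (forall w, (N <= size w)%N -> F w = 0) ->
  wsum M F = wsum N F.
Proof.
move=> le_NM F0; rewrite /wsum -(subnKC le_NM) big_split_ord /=.
rewrite [X in _ + X]big1 ?addr0 // => L _.
rewrite (@eq_sum_words _ F (fun _ => 0)) ?big1 // => w Hw.
by apply: F0; rewrite Hw leq_addr.
Qed.

Lemma wsumS N F : wsum N.+1 F = F [::] + wsum N (fun w => F (U :: w))
  + wsum N (fun w => F (D :: w)) + wsum N (fun w => F (H :: w)).
Proof.
rewrite /wsum big_ord_recl sum_words0 -!addrA; congr (_ + _).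
by under eq_bigr do rewrite sum_wordsS; rewrite !big_split /= addrA.
Qed.

Lemma wsum_mul_sum N m (F G : nat -> seq step -> R) :
  wsum N (fun a => wsum N (fun b => \sum_(i < m) F i a * G i b)) =
  \sum_(i < m) wsum N (F i) * wsum N (G i).
Proof.
rewrite /wsum; transitivity (\sum_(i < m) \sum_(k < N) \sum_(a <- words k)
    \sum_(j < N) \sum_(b <- words j) F i a * G i b); last first.
  apply: eq_bigr => i _; rewrite mulr_suml; apply: eq_bigr => k _.
  by rewrite mulr_suml; apply: eq_bigr => a _; rewrite mulr_sumr;
    apply: eq_bigr => j _; rewrite mulr_sumr.
symmetry; rewrite exchange_big; apply: eq_bigr => k _.
rewrite exchange_big; apply: eq_bigr => a _.
by rewrite exchange_big; apply: eq_bigr => j _; rewrite exchange_big.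
Qed.

Lemma sum_antidiagonals N (G : nat -> nat -> R) :
  \sum_(L < N) \sum_(k < L) G k (L - k.+1)%N =
  \sum_(k < N) \sum_(j < N - k.+1) G k j.
Proof.
elim: N => [|N IH]; first by rewrite !big_ord0.
rewrite big_ord_recr /= IH [RHS]big_ord_recr /= subnn big_ord0 addr0.
rewrite -big_split /=; apply: eq_bigr => k _.
by rewrite subSS -(subnSK (ltn_ord k)) big_ord_recr.
Qed.

Lemma sum_antidiagonals_square N (G : nat -> nat -> R) :
  (forall k j, (N <= k + j.+1)%N -> G k j = 0) ->
  \sum_(L < N) \sum_(k < L) G k (L - k.+1)%N = \sum_(k < N) \sum_(j < N) G k j.
Proof.
move=> G0; rewrite sum_antidiagonals; apply: eq_bigr => k _.
rewrite (big_ord_widen N (G k)) ?leq_subr // big_mkcond /=.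
apply: eq_bigr => j _; case: ifP => // /negbT; rewrite -leqNgt => le_N.
by rewrite G0 //; lia.
Qed.

Lemma wsum_first_return N F :
  (forall a b, (N <= size a + (size b).+1)%N -> F (a ++ D :: b) = 0) ->
  wsum N (fun w => (schroder_from 1 w)%:R * F w) =
  wsum N (fun a => wsum N (fun b =>
    (schroder_from 0 a && schroder_from 0 b)%:R * F (a ++ D :: b))).
Proof.
move=> F0; pose G k j := \sum_(a <- words k) \sum_(b <- words j)
  (schroder_from 0 a && schroder_from 0 b)%:R * F (a ++ D :: b).
transitivity (\sum_(k < N) \sum_(j < N) G k j);
  last by apply: eq_bigr => k _; rewrite exchange_big.
rewrite -(@sum_antidiagonals_square N G) => [|k j le_N]; last first.
  rewrite /G (eq_sum_words (G := fun=> 0)) ?big1 // => a Ha.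
  rewrite (eq_sum_words (G := fun=> 0)) ?big1 // => b Hb.
  by rewrite F0 ?mulr0 // Ha Hb.
apply: eq_bigr => L _.
transitivity (\sum_(w <- words L) \sum_(k < L) (first_return_at k w)%:R * F w).
  by apply: eq_sum_words => w Hw; rewrite -count_first_returns mulr_suml Hw.
rewrite exchange_big; apply: eq_bigr => k _; rewrite (sum_words_split _ (ltn_ord k)).
apply: eq_sum_words => a Ha; apply: eq_bigr => b _.
by rewrite -Ha !first_return_at_cat /= !mul0r add0r addr0.
Qed.

End WordSums.

Lemma xlen_nil : xlen [::] = 0%N.
Proof. by rewrite /xlen big_nil. Qed.

Lemma xlen_cons s w : xlen (s :: w) = ((if s is H then 2 else 1) + xlen w)%N.
Proof. by rewrite /xlen big_cons. Qed.

Lemma xlen_cat a b : xlen (a ++ b) = (xlen a + xlen b)%N.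
Proof. by rewrite /xlen big_cat. Qed.

Lemma size_le_xlen w : (size w <= xlen w)%N.
Proof. by elim: w => [|s w IH]; rewrite ?xlen_nil ?xlen_cons //=; case: s; lia. Qed.

Lemma odd_xlen h w : schroder_from h w -> odd (xlen w) = odd h.
Proof.
elim: w h => [|s w IH] h /=; first by move/eqP->; rewrite xlen_nil.
rewrite xlen_cons; case: s => /=.
- by move/IH->; rewrite negbK.
- by case/andP=> h_gt0 /IH->; case: h h_gt0 => //= h _; rewrite negbK.
- by move/IH<-; rewrite negbK.
Qed.

Section SchroderSums.
Variable R : nzRingType.
Implicit Types (F G : seq step -> R).

Definition schroder_sum n F : R :=
  wsum n.*2.+1 (fun w => if is_schroder w && (xlen w == n.*2) then F w else 0).

Lemma schroder_sum_bound n N F : (n.*2 < N)%N ->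
  wsum N (fun w => if is_schroder w && (xlen w == n.*2) then F w else 0) =
  schroder_sum n F.
Proof.
move=> lt_nN; apply: wsum_ext => // w le_nw.
have := size_le_xlen w; case: eqP => [|_]; last by rewrite andbF.
by lia.
Qed.

Lemma eq_schroder_sum n F G : F =1 G -> schroder_sum n F = schroder_sum n G.
Proof. by move=> FG; apply: eq_wsum => w; rewrite FG. Qed.

Lemma schroder_sumD n F G :
  schroder_sum n (fun w => F w + G w) = schroder_sum n F + schroder_sum n G.
Proof.
by rewrite /schroder_sum -wsumD; apply: eq_wsum => w; case: ifP; rewrite ?addr0.
Qed.

Lemma schroder_sumZ n F c :
  schroder_sum n (fun w => c * F w) = c * schroder_sum n F.
Proof.
by rewrite /schroder_sum -wsumZ; apply: eq_wsum => w; case: ifP; rewrite ?mulr0.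
Qed.

Lemma schroder_sum_first_step n F : schroder_sum n F =
  (n == 0)%:R * F [::] + (if n is n'.+1 then schroder_sum n' (fun w => F (H :: w)) else 0)
  + wsum n.*2 (fun w =>
      if schroder_from 1 w && ((xlen w).+1 == n.*2) then F (U :: w) else 0).
Proof.
rewrite /schroder_sum wsumS [X in _ + _ + X + _]wsum0 ?addr0 => [|w]; last first.
  by rewrite /is_schroder.
rewrite -addrA [X in _ + X]addrC addrA; congr (_ + _ + _).
- by rewrite xlen_nil; case: n => [|n]; rewrite ?mul1r ?mul0r.
- case: n => [|n]; first by rewrite /wsum big_ord0.
  rewrite -[RHS](schroder_sum_bound (N := n.+1.*2)) ?doubleS //.
  by apply: eq_wsum => w; rewrite /is_schroder xlen_cons /= !add2n eqSS.
- by apply: eq_wsum => w; rewrite xlen_cons.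
Qed.

End SchroderSums.

Definition starts_up (w : seq step) : bool := if w is U :: _ then true else false.

Lemma omegaDU_cons s w :
  omegaDU (s :: w) = (omegaDU w + (is_down s && starts_up w))%N.
Proof. by case: s; case: w => [|[] w] //=; rewrite ?addn0 ?addn1. Qed.

Lemma omegaDU_catD a b : omegaDU (a ++ D :: b) = (omegaDU a + omegaDU (D :: b))%N.
Proof.
elim: a => [|s a IH] //.
rewrite cat_cons omegaDU_cons IH [omegaDU (s :: a)]omegaDU_cons addnAC.
by case: a {IH}.
Qed.

Definition weight (w : seq step) : {poly rat} := q ^+ (omegaH w + omegaDU w).

(* Extra factor q when a path starts with U, creating a DU after a D. *)
Definition up_bonus (w : seq step) : {poly rat} := if starts_up w then q else 1.

Lemma weight_nil : weight [::] = 1.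
Proof. by rewrite /weight expr0. Qed.

Lemma weight_H w : weight (H :: w) = q * weight w.
Proof. by rewrite /weight /omegaH /= -exprS addSn. Qed.

Lemma weight_first_return a b :
  weight (U :: a ++ D :: b) = weight a * (weight b * up_bonus b).
Proof.
rewrite /weight /up_bonus /omegaH /= count_cat /= omegaDU_catD omegaDU_cons /=.
case: (starts_up b); rewrite mulrA -exprD ?mulr1 -?exprSr; congr (_ ^+ _); lia.
Qed.

Lemma schroder_gf_sum n : schroder_gf n = schroder_sum n weight.
Proof.
rewrite /schroder_gf /words_upto big_flatten big_map.
rewrite -[iota 0 _]/(index_iota 0 n.*2.+1) big_mkord.
by apply: eq_bigr => L _; rewrite big_mkcond.
Qed.

Section Convolution.
Variable R : comNzRingType.
Implicit Types a b c : nat -> R.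

Definition conv a b (n : nat) : R := \sum_(i < n.+1) a i * b (n - i)%N.

Lemma eq_conv a b c : b =1 c -> conv a b =1 conv a c.
Proof. by move=> bc n; apply: eq_bigr => i _; rewrite bc. Qed.

Lemma convD a b c n : conv a (fun j => b j + c j) n = conv a b n + conv a c n.
Proof. by rewrite /conv -big_split; apply: eq_bigr => i _; rewrite mulrDr. Qed.

Lemma convZ a b (x : R) n : conv a (fun j => x * b j) n = x * conv a b n.
Proof. by rewrite /conv mulr_sumr; apply: eq_bigr => i _; rewrite mulrCA. Qed.

Lemma conv_delta a n : conv a (fun j => (j == 0)%:R) n = a n.
Proof.
rewrite /conv big_ord_recr /= subnn mulr1 big1 ?add0r // => i _.
by rewrite subn_eq0 leqNgt ltn_ord mulr0.
Qed.

Lemma conv_shift a b n :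
  conv a (fun j => if j is j'.+1 then b j' else 0) n =
  if n is n'.+1 then conv a b n' else 0.
Proof.
rewrite /conv big_ord_recr /= subnn mulr0 addr0.
case: n => [|n]; first by rewrite big_ord0.
by apply: eq_bigr => i _; rewrite -(subnSK (ltn_ord i)).
Qed.

End Convolution.

Lemma indicator_sum_split (R : nzRingType) p r n :
  ((p + r == n)%N%:R : R) = \sum_(i < n.+1) ((p == i) && (r == n - i)%N)%:R.
Proof.
have [lt_pn|le_np] := ltnP p n.+1; last first.
  rewrite big1 => [|i _]; last first.
    by have := ltn_ord i => ?; rewrite (_ : (p == i) = false) //; apply/eqP; lia.
  by rewrite (_ : (p + r == n)%N = false) //; apply/eqP; lia.
rewrite (bigD1 (Ordinal lt_pn)) //= eqxx big1 ?addr0 => [|i ne_ip].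
  by rewrite (_ : (p + r == n) = (r == n - p))%N //; apply/eqP/eqP; lia.
rewrite (_ : (p == i) = false) //; apply/negbTE; apply: contra ne_ip => /eqP pi.
by apply/eqP/val_inj.
Qed.

Lemma half_xlen w : is_schroder w -> ((xlen w)./2).*2 = xlen w.
Proof.
by move=> Sw; rewrite -[RHS]odd_double_half (odd_xlen Sw).
Qed.

Definition bonus_sum (j : nat) : {poly rat} :=
  schroder_sum j (fun w => weight w * up_bonus w).

(* The paths not starting with U are the empty path and the paths H :: w. *)
Lemma not_up_sum j :
  schroder_sum j (fun w => weight w * (~~ starts_up w)%:R) =
  (j == 0)%:R + (if j is j'.+1 then q * schroder_gf j' else 0).
Proof.
rewrite schroder_sum_first_step weight_nil /= mul1r mulr1.
rewrite [X in _ + X]wsum0 ?addr0 => [|w]; last by case: ifP; rewrite ?mulr0.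
case: j => [|j]; rewrite ?addr0 //.
rewrite schroder_gf_sum -schroder_sumZ; congr (_ + _); apply: eq_schroder_sum => w.
by rewrite weight_H mulr1.
Qed.

Lemma bonus_sum_eq j : bonus_sum j = q * schroder_gf j +
  (1 - q) * ((j == 0)%:R + (if j is j'.+1 then q * schroder_gf j' else 0)).
Proof.
rewrite -not_up_sum schroder_gf_sum -!schroder_sumZ -schroder_sumD.
by apply: eq_schroder_sum => w; rewrite /up_bonus; case: starts_up => /=; ring.
Qed.

(* The paths U :: w of semi-length n + 1 contribute the convolution of f with
   the bonus sum (first-return decomposition of w). *)
Lemma up_term n :
  wsum n.+1.*2 (fun w => if schroder_from 1 w && ((xlen w).+1 == n.+1.*2)
                         then weight (U :: w) else 0) =
  conv schroder_gf bonus_sum n.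
Proof.
set N := n.+1.*2.
pose A i a := if is_schroder a && (xlen a == i.*2) then weight a else 0.
pose B i b :=
  if is_schroder b && (xlen b == (n - i).*2) then weight b * up_bonus b else 0.
transitivity (wsum N (fun a => wsum N (fun b => \sum_(i < n.+1) A i a * B i b))).
  rewrite (@eq_wsum _ N _ (fun w => (schroder_from 1 w)%:R *
      (if (xlen w).+1 == N then weight (U :: w) else 0))) => [|w]; last first.
    by case: schroder_from; rewrite ?mul1r ?mul0r.
  rewrite wsum_first_return => [|a b le_N]; last first.
    rewrite xlen_cat xlen_cons; have := size_le_xlen a; have := size_le_xlen b.
    by case: eqP; rewrite ?mulr0 //; lia.
  apply: eq_wsum => a; apply: eq_wsum => b; rewrite /A /B /is_schroder.
  case Sa: (schroder_from 0 a); last by rewrite mul0r big1 // => i _; rewrite mul0r.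
  case Sb: (schroder_from 0 b); last by rewrite mul0r big1 // => i _; rewrite mulr0.
  rewrite mul1r xlen_cat xlen_cons weight_first_return -(half_xlen Sa) -(half_xlen Sb).
  set p := (xlen a)./2; set r := (xlen b)./2; set W := weight a * _.
  rewrite (_ : ((p.*2 + (1 + r.*2)).+1 == N) = (p + r == n))%N; last first.
    by apply/eqP/eqP; rewrite /N; lia.
  transitivity ((p + r == n)%N%:R * W); first by case: eqP; rewrite ?mul1r ?mul0r.
  rewrite indicator_sum_split mulr_suml; apply: eq_bigr => i _.
  rewrite !(inj_eq double_inj).
  by case: (p == i); case: (r == n - i)%N; rewrite ?mul1r ?mul0r ?mulr0.
rewrite wsum_mul_sum; apply: eq_bigr => i _; have le_in := ltn_ord i.
rewrite schroder_gf_sum /bonus_sum /A /B.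
by rewrite !schroder_sum_bound // /N ltn_double; lia.
Qed.

Lemma schroder_gf_rec n : schroder_gf n.+1 = schroder_gf n
  + q * conv schroder_gf schroder_gf n
  + (if n is n'.+1 then q * (1 - q) * conv schroder_gf schroder_gf n' else 0).
Proof.
rewrite {1}schroder_gf_sum schroder_sum_first_step /= mul0r add0r.
rewrite (eq_schroder_sum _ weight_H) schroder_sumZ -schroder_gf_sum up_term.
rewrite (eq_conv _ bonus_sum_eq) convD !convZ convD conv_delta conv_shift.
by case: n => [|n]; rewrite ?convZ; ring.
Qed.

Lemma coefM_low (R : nzRingType) (p r : {poly R}) n m :
  (forall i, (i <= n)%N -> r`_i = 0) -> (m <= n)%N -> (p * r)`_m = 0.
Proof.
move=> r0 le_mn; rewrite coefM big1 // => i _.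
by rewrite r0 ?mulr0 //; have := ltn_ord i; lia.
Qed.

Section QuadraticRecurrence.
Variables (R : comNzRingType) (t : R) (a : nat -> R).
Hypothesis a0 : a 0 = 1.
Hypothesis a_rec : forall n, a n.+1 =
  a n + t * conv a a n + (if n is n'.+1 then t * (1 - t) * conv a a n' else 0).

Definition quad_coef : {poly R} := t%:P * 'X * (1 + (1 - t%:P) * 'X).

Definition fun_eq_residual (P : {poly R}) : {poly R} :=
  quad_coef * P ^+ 2 - (1 - 'X) * P + 1.

Definition trunc (n : nat) : {poly R} := \poly_(i < n.+1) a i.

Lemma coef_trunc n m : (m <= n)%N -> (trunc n)`_m = a m.
Proof. by move=> le_mn; rewrite coef_poly ltnS le_mn. Qed.

Lemma coef_trunc_sqr n m : (m <= n)%N -> (trunc n ^+ 2)`_m = conv a a m.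
Proof.
move=> le_mn; rewrite expr2 coefM; apply: eq_bigr => i _.
by rewrite !coef_trunc //; have := ltn_ord i; lia.
Qed.

Lemma fun_eq_residual_trunc n m : (m <= n)%N -> (fun_eq_residual (trunc n))`_m = 0.
Proof.
move=> le_mn.
have -> : fun_eq_residual (trunc n) = 'X * (t%:P * trunc n ^+ 2)
    + 'X * ('X * ((t * (1 - t))%:P * trunc n ^+ 2)) - trunc n + 'X * trunc n + 1.
  by rewrite /fun_eq_residual /quad_coef polyCM polyCB polyC1; ring.
rewrite !(coefD, coefN, coefXM, coefCM, coef1).
case: m le_mn => [|m] le_mn /=; first by rewrite coef_trunc // a0; ring.
rewrite coef_trunc_sqr ?coef_trunc ?a_rec; try lia.
case: m le_mn => [|m] le_mn /=; first by ring.
by rewrite coef_trunc_sqr; [ring | lia].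
Qed.

(* Completing the square in the functional equation. *)
Lemma sqr_identity P : (1 - 'X - 2%:R * quad_coef * P) ^+ 2 =
  (1 - 'X) ^+ 2 - 4%:R * quad_coef + 4%:R * quad_coef * fun_eq_residual P.
Proof. by rewrite /fun_eq_residual; ring. Qed.

(* S = (1 - x) - 2 c a, whose coefficients below n only involve P_n. *)
Definition sqrt_series : fps R :=
  fun m => (1 - 'X)`_m - fps_mul (fps_of_poly (2%:R * quad_coef)) a m.

Lemma sqrt_series_trunc n m : (m <= n)%N ->
  sqrt_series m = (1 - 'X - 2%:R * quad_coef * trunc n)`_m.
Proof.
move=> le_mn; rewrite /sqrt_series [RHS]coefB coefM /fps_mul /fps_of_poly.
by congr (_ - _); apply: eq_bigr => i _; rewrite coef_trunc //; have := ltn_ord i; lia.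
Qed.

Lemma sqrt_series_sqrt :
  is_fsqrt sqrt_series (fps_of_poly ((1 - 'X) ^+ 2 - 4%:R * quad_coef)).
Proof.
split.
  rewrite (sqrt_series_trunc (n := 0)) //.
  have -> : 2%:R * quad_coef * trunc 0 =
            'X * (2%:R * t%:P * (1 + (1 - t%:P) * 'X) * trunc 0).
    by rewrite /quad_coef; ring.
  by rewrite coefB coefXM coefB coef1 coefX subr0 /= subr0.
move=> n; rewrite /fps_mul /fps_of_poly.
transitivity (((1 - 'X - 2%:R * quad_coef * trunc n) ^+ 2)`_n).
  rewrite expr2 coefM; apply: eq_bigr => i _.
  by rewrite !(sqrt_series_trunc (n := n)) //; have := ltn_ord i; lia.
by rewrite sqr_identity coefD (coefM_low _ (fun_eq_residual_trunc (n := n))) // addr0.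
Qed.
End QuadraticRecurrence.

(* Only the empty path has semi-length 0. *)
Lemma schroder_gf0 : schroder_gf 0 = 1.
Proof.
by rewrite schroder_gf_sum schroder_sum_first_step weight_nil /wsum big_ord0 !addr0 mulr1.
Qed.

(* f(q;x) = (1 - x - sqrt Delta) / (2 q x (1 + (1 - q) x)), stated as
   denom * f = (1 - x) - S with S the principal square root of Delta. *)
Theorem mainTheorem12 :
  exists S : fps {poly rat},
    is_fsqrt S (fps_of_poly Delta) /\
    forall n : nat,
      fps_mul (fps_of_poly denom) schroder_gf n
      = fps_of_poly numer_poly n - S n.
Proof.
have denom_c : denom = 2%:R * quad_coef q by rewrite /denom /quad_coef /Qx; ring.
have Delta_c : Delta = (1 - 'X) ^+ 2 - 4%:R * quad_coef q.
  by rewrite /Delta /quad_coef /Qx; ring.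
exists (sqrt_series q schroder_gf); split.
  by rewrite Delta_c; exact: sqrt_series_sqrt schroder_gf0 schroder_gf_rec.
by move=> n; rewrite /sqrt_series denom_c /fps_of_poly /numer_poly opprB addrC subrK.
Qed.
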